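(* Let $(X,\rho,\mu)$ be a $K$-doubling metric measure space, $(M,d)$ a complete metric space, $C\subseteq X$ a nonempty closed set and $f\colon C\to M$ an arbitrary function. Then there exists $\tilde f\colon X\to M$ with $\tilde f|_C=f$ and $A_f\subseteq A_{\tilde f}$.
   Context: A $K$-doubling metric measure space ($K>0$) is a triple $(X,\rho,\mu)$ where $(X,\rho)$ is a complete separable metric space and $\mu$ is a Borel-regular outer measure on $X$ with $0<\mu(B_{2r}(x))\le K\mu(B_r(x))<+\infty$ for all $x\in X$, $r>0$. For $g\colon A\to M$, $\operatorname{Lip} g(x)=\limsup_{y\in A,y\to x}d(g(y),g(x))/\rho(y,x)$ and $A_g$ is the set of accumulation points $x\in A$ of $A$ with $\operatorname{Lip} g(x)<+\infty$. *)

From HB Require Import structures.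
From mathcomp Require Import all_boot all_order all_algebra.
From mathcomp Require Import all_classical all_reals all_analysis.
Set Implicit Arguments. Unset Strict Implicit. Unset Printing Implicit Defensive.
Import Order.TTheory GRing.Theory Num.Theory.
Local Open Scope classical_set_scope.
Local Open Scope ring_scope.

Section MetricDefs.
Variables (R : realType) (X : Type) (rho : X -> X -> R).

Definition is_metric : Prop :=
  [/\ forall x y, 0 <= rho x y,
      forall x y, rho x y = 0 <-> x = y,
      forall x y, rho x y = rho y x &
      forall x y z, rho x z <= rho x y + rho y z].

Definition metric_complete : Prop :=
  forall u : nat -> X,
    (forall e : R, 0 < e -> exists N, forall m n, (N <= m)%N -> (N <= n)%N ->
        rho (u m) (u n) < e) ->
    exists l, forall e : R, 0 < e -> exists N, forall n, (N <= n)%N -> rho (u n) l < e.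

Definition metric_separable : Prop :=
  exists D : set X, countable D /\
    forall x (e : R), 0 < e -> exists2 y, D y & rho x y < e.

Definition mball (x : X) (r : R) : set X := [set y | rho x y < r].

Definition metric_open (U : set X) : Prop :=
  forall x, U x -> exists2 r : R, 0 < r & mball x r `<=` U.

Definition metric_closed (C : set X) : Prop := metric_open (~` C).

Definition metric_borel : set (set X) :=
  smallest (sigma_algebra setT) metric_open.

Definition borel_regular (mu : {outer_measure set X -> \bar R}) : Prop :=
  (forall B, metric_borel B -> caratheodory_measurable mu B) /\
  (forall A, exists B, [/\ metric_borel B, A `<=` B & mu B = mu A]).

Definition doubling (K : R) (mu : {outer_measure set X -> \bar R}) : Prop :=
  forall x (r : R), 0 < r ->
    [/\ (0 < mu (mball x (2 * r)))%E,
        (mu (mball x (2 * r)) <= K%:E * mu (mball x r))%E &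
        (K%:E * mu (mball x r) < +oo)%E].

Definition acc_point (A : set X) (x : X) : Prop :=
  forall e : R, 0 < e -> exists2 y, A y & 0 < rho y x < e.

End MetricDefs.

Definition doubling_mms (R : realType) (X : Type) (K : R) (rho : X -> X -> R)
  (mu : {outer_measure set X -> \bar R}) : Prop :=
  [/\ 0 < K, is_metric rho, metric_complete rho, metric_separable rho &
      (borel_regular rho mu /\ doubling rho K mu)].

Section Lip.
Variables (R : realType) (X M : Type) (rho : X -> X -> R) (d : M -> M -> R).

(* Lip g (x) = limsup_{y in A, y -> x} d(g y, g x) / rho(y, x), for g : A -> M
   (represented by a function on X of which only the values on A matter) *)
Definition Lip (A : set X) (g : X -> M) (x : X) : \bar R :=
  ereal_inf ((fun delta : R =>
      ereal_sup ((fun y => ((d (g y) (g x)) / rho y x)%:E) @`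
                 [set y | A y /\ 0 < rho y x < delta]))
    @` [set delta : R | 0 < delta]).

Definition Afin (A : set X) (g : X -> M) : set X :=
  [set x | [/\ A x, acc_point rho A x & (Lip A g x < +oo)%E]].

End Lip.

(** The extension is [f \o r], where [r] retracts [X] onto [C] by sending each
    point to a point of [C] at most twice as far as the distance to [C].  Then
    [rho (r y) x <= 3 rho y x] for every [x] in [C], so a bound
    [d (f z) (f x) <= B rho z x] for [z] in [C] near [x] becomes a bound
    [d (f (r y)) (f x) <= 3 B rho y x] for all [y] near [x]. *)
From HB Require Import structures.
From mathcomp Require Import all_boot all_order all_algebra.
From mathcomp Require Import all_classical all_reals all_analysis.
From mathcomp Require Import lra.
Set Implicit Arguments. Unset Strict Implicit. Unset Printing Implicit Defensive.
Import Order.TTheory GRing.Theory Num.Theory.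
Local Open Scope classical_set_scope.
Local Open Scope ring_scope.

Section Retraction.
Variables (R : realType) (X : Type) (rho : X -> X -> R).
Hypothesis rho_metric : is_metric rho.

Lemma metric_dist0 (x : X) : rho x x = 0.
Proof. by case: rho_metric => _ req _ _; apply/req. Qed.

Lemma quasi_nearest_point (C : set X) : C !=set0 -> metric_closed rho C ->
  forall y, exists c, [/\ C c, C y -> c = y & forall x, C x -> rho y c <= 2 * rho y x].
Proof.
move=> [c0 Cc0] Ccl y; have [r0 _ _ _] := rho_metric.
have [Cy|nCy] := pselect (C y).
  by exists y; split=> // x _; rewrite metric_dist0 mulr_ge0.
have [r r_gt0 ballC] := Ccl y nCy.
set S := [set rho y c | c in C].
have S0 : S !=set0 by exists (rho y c0), c0.
have lbS : lbound S 0 by move=> _ [c _ <-].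
have dist_gt0 : 0 < inf S.
  apply: (lt_le_trans r_gt0); apply: lb_le_inf => // _ [c Cc <-].
  by rewrite leNgt; apply/negP => /ballC.
have [_ [c Cc <-] lt2inf] : exists2 z, S z & z < 2 * inf S.
  by apply: inf_lt => //; rewrite mulr_natl mulr2n ltrDr.
exists c; split=> [//|/nCy //|x Cx].
apply: (le_trans (ltW lt2inf)); rewrite ler_pM2l //.
by apply: ge_inf; [exists 0 | exists x].
Qed.

Lemma quasi_nearest_retraction (C : set X) : C !=set0 -> metric_closed rho C ->
  exists r : X -> X, forall y,
    [/\ C (r y), C y -> r y = y & forall x, C x -> rho (r y) x <= 3 * rho y x].
Proof.
move=> C0 Ccl; have [r hr] := choice (quasi_nearest_point C0 Ccl).
exists r => y; have [Cry ry_id ry_near] := hr y; split=> // x Cx.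
have [_ _ rsym rtri] := rho_metric.
have := ry_near x Cx; have := rtri (r y) y x; rewrite (rsym (r y) y); lra.
Qed.

End Retraction.

Lemma acc_pointS (R : realType) (X : Type) (rho : X -> X -> R) (A B : set X) x :
  A `<=` B -> acc_point rho A x -> acc_point rho B x.
Proof. by move=> AB accA e e0; have [y /AB By ?] := accA e e0; exists y. Qed.

Section Lip.
Variables (R : realType) (X M : Type) (rho : X -> X -> R) (d : M -> M -> R).

Lemma Lip_lt_pinfty_bound (A : set X) (g : X -> M) (x : X) :
  (Lip rho d A g x < +oo)%E ->
  exists2 delta : R, 0 < delta & exists2 B : R, 0 <= B &
    forall y, A y -> 0 < rho y x < delta -> d (g y) (g x) <= B * rho y x.
Proof.
move=> /ereal_inf_lt[_ [delta delta_gt0 <-] s_lt].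
set s := ereal_sup _ in s_lt.
exists delta => //; exists (Num.max (fine s) 0); first by rewrite le_max lexx orbT.
move=> y Ay /[dup] /andP[ry_gt0 _] ry.
have le_s : (((d (g y) (g x)) / rho y x)%:E <= s)%E by apply: ereal_sup_ubound; exists y.
have s_fin : s \is a fin_num.
  by rewrite fin_numE (lt_eqF s_lt) andbT; apply: contraTneq le_s => ->; rewrite leeNy_eq.
by rewrite -ler_pdivrMr // le_max -lee_fin fineK // le_s.
Qed.

Lemma Lip_lt_pinfty_of_bound (A : set X) (g : X -> M) (x : X) (delta B : R) :
  0 < delta ->
  (forall y, A y -> 0 < rho y x < delta -> d (g y) (g x) <= B * rho y x) ->
  (Lip rho d A g x < +oo)%E.
Proof.
move=> delta_gt0 bound; apply: (@le_lt_trans _ _ B%:E); last exact: ltry.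
apply: (le_trans (ereal_inf_lbound _)); first by exists delta.
apply: ge_ereal_sup => _ [y [Ay ry] <-].
by rewrite lee_fin ler_pdivrMr ?bound //; case/andP: ry.
Qed.

Hypotheses (rho_metric : is_metric rho) (d_metric : is_metric d).

Lemma Lip_comp_lt_pinfty (A B : set X) (g : X -> M) (r : X -> X) (x : X) (k : R) :
  0 < k -> r x = x -> (forall y, A y -> B (r y) /\ rho (r y) x <= k * rho y x) ->
  (Lip rho d B g x < +oo)%E -> (Lip rho d A (g \o r) x < +oo)%E.
Proof.
move=> k_gt0 rx_id near_r /Lip_lt_pinfty_bound[delta delta_gt0 [L L_ge0 boundL]].
apply: (Lip_lt_pinfty_of_bound (delta := delta / k) (B := k * L)).
  by rewrite divr_gt0.
move=> y Ay /andP[ry_gt0 ry_lt] /=; have [Bry ryx_le] := near_r y Ay; rewrite rx_id.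
have [->|ry_neq] := pselect (r y = x).
  by rewrite metric_dist0 // !mulr_ge0 // ltW.
have ryx_gt0 : 0 < rho (r y) x.
  have [r0 req _ _] := rho_metric.
  by rewrite lt_neqAle r0 andbT; apply/eqP => /esym /req.
apply: (le_trans (boundL _ Bry _)).
  by rewrite ryx_gt0 /=; apply: (le_lt_trans ryx_le); rewrite -ltr_pdivlMl // mulrC.
by rewrite -mulrA mulrCA ler_wpM2l.
Qed.

End Lip.

Theorem proposition2p10 (R : realType) (X : Type) (rho : X -> X -> R)
  (mu : {outer_measure set X -> \bar R}) (K : R)
  (M : Type) (d : M -> M -> R) (C : set X) (f : X -> M) :
  doubling_mms K rho mu ->
  is_metric d -> metric_complete d ->
  C !=set0 -> metric_closed rho C ->
  exists ft : X -> M,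
    (forall x, C x -> ft x = f x) /\
    Afin rho d C f `<=` Afin rho d setT ft.
Proof.
move=> [_ rho_metric _ _ _] d_metric _ C0 Ccl.
have [r retr] := quasi_nearest_retraction rho_metric C0 Ccl.
have r_id x : C x -> r x = x by case: (retr x) => _ rx_id _; apply: rx_id.
exists (f \o r); split=> [x Cx|x [Cx accx Lipx]]; first by rewrite /= r_id.
split=> //; first exact: acc_pointS accx.
apply: (Lip_comp_lt_pinfty rho_metric d_metric (k := 3) _ (r_id x Cx) _ Lipx) => // y _.
by have [Cry _ ry_near] := retr y; split=> //; apply: ry_near.
Qed.
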